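(* Let $n\ge0$, $d\ge 1$, $l>0$, and $m = 2^{n+1}-1+2l$. For integers $m'=2^{n+1}-\epsilon+2l'$ with $\epsilon\in\{0,1\}$, $l'\ge0$, set $$k^G_n(d,m') = \sum_{i\ge0}\binom{2^{n+1}-\epsilon}{d-2i}\binom{l'}{i},\qquad \bar k^C_n(d,m') = \sum_{i\ge0}\binom{2^{n+1}-1-\epsilon}{d-1-2i}\binom{l'}{i}.$$ Then $$\frac12\left[k^G_n(d,m-1)+\bar k^C_n(d,m)-k^G_n(d,m)\right] = \sum_{i\ge0}\binom{2^{n+1}-2}{d-1-2i}\binom{l-1}{i}.$$
   Context: Binomial coefficients $\binom{a}{b}$ are $0$ when $b<0$ or $b>a$. Note $m-1 = 2^{n+1}+2(l-1)$, so $k^G_n(d,m-1)$ uses $\epsilon=0$, $l'=l-1$, while $k^G_n(d,m)$ and $\bar k^C_n(d,m)$ use $\epsilon=1$, $l'=l$. *)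

From mathcomp Require Import all_boot all_order all_algebra.
Set Implicit Arguments. Unset Strict Implicit. Unset Printing Implicit Defensive.
Import Order.TTheory GRing.Theory Num.Theory.

Definition binomZ (a : nat) (b : int) : nat :=
  match b with
  | Posz k => 'C(a, k)
  | Negz _ => 0%N
  end.

(* For m' = 2^(n+1) - eps + 2 l' (eps in {0,1}, l' >= 0):
   eps is the parity of m' (2^(n+1) is even), and
   l' = (m' + eps - 2^(n+1)) / 2. *)
Definition eps_of (m' : nat) : nat := odd m'.
Definition l_of (n m' : nat) : nat := (m' + eps_of m' - 2 ^ n.+1)./2.

(* The sums over i >= 0 are finite: terms with 2 i > d vanish,
   so summing over 0 <= i <= d is the full sum. *)
Definition kG (n d m' : nat) : nat :=
  \sum_(0 <= i < d.+1)
     binomZ (2 ^ n.+1 - eps_of m') (d%:Z - (2 * i)%:Z) * 'C(l_of n m', i).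

Definition kbarC (n d m' : nat) : nat :=
  \sum_(0 <= i < d.+1)
     binomZ (2 ^ n.+1 - 1 - eps_of m') (d%:Z - 1 - (2 * i)%:Z) * 'C(l_of n m', i).

(* Writing S(a, c, L) for the sum over i of C(a, c - 2i) C(L, i), the three
   quantities are S(a+2, d, l-1), S(a, d-1, l) and S(a+1, d, l) with
   a = 2^(n+1) - 2, and the right-hand side is S(a, d-1, l-1).  Pascal's rule
   in the upper index a gives S(a+1, c, L) = S(a, c, L) + S(a, c-1, L), and in
   the second factor it gives S(a, c, L+1) = S(a, c, L) + S(a, c-2, L).
   Expanding everything down to S(a, _, l-1) leaves twice the right-hand side. *)
From mathcomp Require Import all_boot all_order all_algebra.
From mathcomp Require Import zify ring.
Import Order.TTheory GRing.Theory Num.Theory.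

Lemma binomZ_lt0 a (b : int) : (b < 0)%R -> binomZ a b = 0.
Proof. by case: b. Qed.

Lemma binomZS a (b : int) : binomZ a.+1 b = binomZ a b + binomZ a (b - 1).
Proof. by case: b => [[|k]|k] //=; rewrite ?bin0 // subn1 binS. Qed.

(* The terms with 2 i > d vanish as soon as c <= d, so the truncation at d
   does not matter in the recurrences below. *)
Definition skew_binom_sum (d a : nat) (c : int) (L : nat) : nat :=
  \sum_(0 <= i < d.+1) binomZ a (c - (2 * i)%:Z) * 'C(L, i).

Lemma skew_binom_sumSa d a c L :
  skew_binom_sum d a.+1 c L = skew_binom_sum d a c L + skew_binom_sum d a (c - 1) L.
Proof.
rewrite /skew_binom_sum -big_split /=; apply: eq_bigr => i _.
by rewrite binomZS mulnDl; congr (_ + binomZ _ _ * _); lia.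
Qed.

Lemma skew_binom_sumSL d a (c : int) L : (c <= d%:Z)%R ->
  skew_binom_sum d a c L.+1 = skew_binom_sum d a c L + skew_binom_sum d a (c - 2) L.
Proof.
move=> le_cd; rewrite /skew_binom_sum big_nat_recl // [in RHS]big_nat_recl //.
rewrite [X in _ = _ + X]big_nat_recr //=.
rewrite (@binomZ_lt0 a (c - 2 - (2 * d)%:Z)); last by lia.
rewrite muln0 addn0 !bin0 -addnA -big_split /=; congr (_ + _).
apply: eq_bigr => i _; rewrite binS mulnDr; congr (_ + binomZ _ _ * _); lia.
Qed.

Lemma skew_binom_sum_identity d a (c : int) L : (c <= d%:Z)%R ->
  skew_binom_sum d a.+2 c L + skew_binom_sum d a (c - 1) L.+1
  = skew_binom_sum d a.+1 c L.+1 + 2 * skew_binom_sum d a (c - 1) L.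
Proof.
move=> le_cd; have le_c1d : (c - 1 <= d%:Z)%R by lia.
rewrite !skew_binom_sumSL // !skew_binom_sumSa.
have -> : (c - 1 - 1 = c - 2)%R by ring.
have -> : (c - 1 - 2 = c - 2 - 1)%R by ring.
lia.
Qed.

Section Parametrization.

Variables (n l' : nat) (eps : bool).

Let m' := 2 ^ n.+1 - eps + 2 * l'.

Lemma eps_ofE : eps_of m' = eps.
Proof.
have pow_gt0 : 0 < 2 ^ n.+1 by rewrite expn_gt0.
rewrite /eps_of /m' oddD mul2n odd_double addbF oddB; last by case: eps.
by rewrite oddX; case: eps.
Qed.

Lemma l_ofE : l_of n m' = l'.
Proof.
have pow_gt0 : 0 < 2 ^ n.+1 by rewrite expn_gt0.
rewrite /l_of eps_ofE; have -> : m' + eps - 2 ^ n.+1 = l'.*2.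
  by rewrite /m'; case: eps => /=; lia.
exact: doubleK.
Qed.

Lemma kG_skew_binom_sum d : kG n d m' = skew_binom_sum d (2 ^ n.+1 - eps) d l'.
Proof. by rewrite /kG eps_ofE l_ofE. Qed.

Lemma kbarC_skew_binom_sum d :
  kbarC n d m' = skew_binom_sum d (2 ^ n.+1 - 1 - eps) (d%:Z - 1) l'.
Proof. by rewrite /kbarC eps_ofE l_ofE. Qed.

End Parametrization.

Theorem lemma6p5 (n d l : nat) (hd : (1 <= d)%N) (hl : (0 < l)%N) :
  let m := (2 ^ n.+1 - 1 + 2 * l)%N in
  ((1 / 2 : rat) * ((kG n d m.-1)%:R + (kbarC n d m)%:R - (kG n d m)%:R)
   = (\sum_(0 <= i < d.+1)
        (binomZ (2 ^ n.+1 - 2) (d%:Z - 1 - (2 * i)%:Z) * 'C(l.-1, i))%N)%:R)%R.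
Proof.
move=> m; have pow_ge2 : 2 <= 2 ^ n.+1 by rewrite expnS leq_pmulr ?expn_gt0.
set a := 2 ^ n.+1 - 2.
have m_pred : m.-1 = 2 ^ n.+1 - false + 2 * l.-1 by rewrite /m; lia.
rewrite m_pred kG_skew_binom_sum (kG_skew_binom_sum _ _ true).
rewrite (kbarC_skew_binom_sum _ _ true).
have -> : 2 ^ n.+1 - 1 - true = a by rewrite /a; lia.
have -> : 2 ^ n.+1 - false = a.+2 by rewrite /a; lia.
have -> : 2 ^ n.+1 - true = a.+1 by rewrite /a; lia.
have doubled := @skew_binom_sum_identity d a d l.-1 (lexx _).
rewrite prednK // in doubled.
rewrite -/(skew_binom_sum d a (d%:Z - 1) l.-1) -natrD doubled natrD natrM.
by rewrite addrAC subrr add0r mulrA div1r mulVf ?mul1r ?pnatr_eq0.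
Qed.
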